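(* Let $N,k$ be positive integers, $p_1,\dots,p_N$ primes with all $p_i>2$, and $s_1,\dots,s_N$ positive integers. Then the group $\mathbb{Z}_{p_1^{s_1}\cdots p_N^{s_N}}\mathbin{\mathrm{wr}}\mathbb{Z}^{2k}$ admits an automorphism with finite Reidemeister number.
   Context: $\mathbb{Z}_q\mathbin{\mathrm{wr}}\mathbb{Z}^d=\bigoplus_{x\in\mathbb{Z}^d}(\mathbb{Z}_q)_x\rtimes\mathbb{Z}^d$ is the restricted wreath product with $\mathbb{Z}^d$ acting by shifting indices. The Reidemeister number $R(\varphi)$ of an automorphism $\varphi$ of a group $G$ is the number of equivalence classes of the relation $g_1\sim hg_2\varphi(h^{-1})$, $h\in G$. *)

From HB Require Import structures.
From mathcomp Require Import all_boot all_order all_algebra.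
Set Implicit Arguments. Unset Strict Implicit. Unset Printing Implicit Defensive.
Import GRing.Theory.
Local Open Scope ring_scope.

Definition Zd (d : nat) := 'rV[int]_d.

Section Wreath.
Variables (q d : nat).

Definition fin_supp (f : Zd d -> 'Z_q) : Prop :=
  exists s : seq (Zd d), forall x, x \notin s -> f x = 0.

Record lamp := Lamp { lamp_fun :> Zd d -> 'Z_q; lamp_fin : fin_supp lamp_fun }.

(* elements (f, v) of  (+)_{x in Z^d} Z_q  >|  Z^d *)
Record WR := MkWR { wr_f : lamp; wr_v : Zd d }.

Lemma fin_supp0 : fin_supp (fun _ => 0).
Proof. by exists [::]. Qed.

Lemma fin_supp_mul (f g : lamp) (v : Zd d) :
  fin_supp (fun x => f x + g (x - v)).
Proof.
case: f => f [s Hs]; case: g => g [t Ht] /=.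
exists (s ++ map (fun y => y + v) t) => x; rewrite mem_cat negb_or => /andP[xs xt].
rewrite Hs // Ht ?addr0 //; apply: contra xt => H.
by apply/mapP; exists (x - v) => //; rewrite subrK.
Qed.

Lemma fin_supp_inv (f : lamp) (v : Zd d) : fin_supp (fun x => - f (x + v)).
Proof.
case: f => f [s Hs] /=.
exists (map (fun y => y - v) s) => x xs; rewrite Hs ?oppr0 //; apply: contra xs => H.
by apply/mapP; exists (x + v) => //; rewrite addrK.
Qed.

Definition wr_one : WR := MkWR (Lamp fin_supp0) 0.
Definition wr_mul (a b : WR) : WR :=
  MkWR (Lamp (fin_supp_mul (wr_f a) (wr_f b) (wr_v a))) (wr_v a + wr_v b).
Definition wr_inv (a : WR) : WR :=
  MkWR (Lamp (fin_supp_inv (wr_f a) (wr_v a))) (- wr_v a).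

Definition is_automorphism (phi : WR -> WR) : Prop :=
  bijective phi /\ forall a b, phi (wr_mul a b) = wr_mul (phi a) (phi b).

Definition twisted_conj (phi : WR -> WR) (g1 g2 : WR) : Prop :=
  exists h, g1 = wr_mul (wr_mul h g2) (wr_inv (phi h)).

Definition finite_reidemeister (phi : WR -> WR) : Prop :=
  exists (n : nat) (r : nat -> WR),
    forall g, exists i, (i < n)%N /\ twisted_conj phi g (r i).
End Wreath.

(* Take an additive M on Z^d with 1 + M + M^2 = 0 (for d = 2k, a block rotation of order 3)
   and phi (f, v) = (-f o M^-1, M v).  Since (1 - M)(2 + M) = 3, every w equals u + r - M u
   for some r with entries in {0, 1, 2}, and (f, u + r - M u) ~ (0, r) as soon as
   f = a + a o sigma for the affine map sigma x = M^-1 (x - w), which has order 3.  That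
   equation is solved by a = (f - f o sigma + f o sigma^2) / 2, because q is odd. *)
From mathcomp Require Import all_boot all_order all_algebra.
From mathcomp Require Import ring zify.
From Stdlib Require Import FunctionalExtensionality ProofIrrelevance.
Set Implicit Arguments. Unset Strict Implicit. Unset Printing Implicit Defensive.
Import GRing.Theory Num.Theory.

Local Open Scope ring_scope.

Definition order3_half (R : comUnitRingType) (X : Type) (sigma : X -> X) (f : X -> R) :
    X -> R :=
  fun y => 2^-1 * (f y - f (sigma y) + f (sigma (sigma y))).

Lemma order3_halfK (R : comUnitRingType) (X : Type) (sigma : X -> X) (f : X -> R) :
  (2 : R) \is a GRing.unit -> (forall x, sigma (sigma (sigma x)) = x) ->
  forall x, order3_half sigma f x + order3_half sigma f (sigma x) = f x.
Proof.
move=> two_unit sigma3 x; rewrite /order3_half sigma3 -mulrDr.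
have -> : f x - f (sigma x) + f (sigma (sigma x)) +
    (f (sigma x) - f (sigma (sigma x)) + f x) = 2 * f x.
  by ring.
by rewrite mulKr.
Qed.

Section FiniteSupport.
Variables (q d : nat).
Implicit Types (f g : Zd d -> 'Z_q).

Lemma fin_supp_add f g : fin_supp f -> fin_supp g -> fin_supp (fun x => f x + g x).
Proof.
move=> [s fs] [t gt]; exists (s ++ t) => x; rewrite mem_cat negb_or => /andP[xs xt].
by rewrite fs // gt // addr0.
Qed.

Lemma fin_supp_opp f : fin_supp f -> fin_supp (fun x => - f x).
Proof. by move=> [s fs]; exists s => x xs; rewrite fs // oppr0. Qed.

Lemma fin_supp_scale (c : 'Z_q) f : fin_supp f -> fin_supp (fun x => c * f x).
Proof. by move=> [s fs]; exists s => x xs; rewrite fs // mulr0. Qed.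

Lemma fin_supp_comp f (g h : Zd d -> Zd d) :
  cancel g h -> fin_supp f -> fin_supp (fun x => f (g x)).
Proof.
move=> gK [s fs]; exists (map h s) => x; apply: contraNeq => fgx.
by apply/mapP; exists (g x); rewrite ?gK //; apply: contraNT fgx => /fs ->.
Qed.

Lemma fin_supp_order3_half (sigma : Zd d -> Zd d) f :
  (forall x, sigma (sigma (sigma x)) = x) -> fin_supp f ->
  fin_supp (order3_half sigma f).
Proof.
move=> sigma3 ff; have sigmaK : cancel sigma (sigma \o sigma) by [].
have f_sigma : fin_supp (fun x => f (sigma x)) by apply: fin_supp_comp sigmaK ff.
apply/fin_supp_scale/fin_supp_add; first exact/fin_supp_add/fin_supp_opp.
exact: (fin_supp_comp (f := fun x => f (sigma x)) sigmaK).
Qed.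

Lemma wr_ext (a b : WR q d) :
  (forall x, wr_f a x = wr_f b x) -> wr_v a = wr_v b -> a = b.
Proof.
case: a b => [[f ff] v] [[g fg] w] /= /functional_extensionality fg_eq <-.
by subst g; rewrite (proof_irrelevance _ ff fg).
Qed.

End FiniteSupport.

Section CubeRootOfUnityAutomorphism.
Variables (q d : nat) (M : {additive Zd d -> Zd d}).
Hypothesis M_cyclotomic3 : forall v, v + M v + M (M v) = 0.

Lemma M3 v : M (M (M v)) = v.
Proof.
have := M_cyclotomic3 (M v); rewrite -(M_cyclotomic3 v) addrC -[RHS]addrA.
exact: addIr.
Qed.

Lemma MK : cancel M (M \o M). Proof. exact: M3. Qed.

Lemma MMK : cancel (M \o M) M. Proof. exact: M3. Qed.

Definition twist_lamp (f : lamp q d) : lamp q d :=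
  Lamp (fin_supp_opp (fin_supp_comp MMK (lamp_fin f))).

Definition untwist_lamp (f : lamp q d) : lamp q d :=
  Lamp (fin_supp_opp (fin_supp_comp MK (lamp_fin f))).

Definition twist (a : WR q d) : WR q d := MkWR (twist_lamp (wr_f a)) (M (wr_v a)).

Definition untwist (a : WR q d) : WR q d :=
  MkWR (untwist_lamp (wr_f a)) (M (M (wr_v a))).

Lemma twist_automorphism : is_automorphism twist.
Proof.
split.
  by exists untwist => -[f v]; apply: wr_ext => [x|] /=; rewrite ?opprK M3.
move=> [f v] [g w]; apply: wr_ext => [x|] /=; last exact: raddfD.
by rewrite !raddfB /= M3 opprD.
Qed.

Definition sigma (w x : Zd d) : Zd d := M (M (x - w)).

Lemma sigma3 w x : sigma w (sigma w (sigma w x)) = x.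
Proof.
rewrite /sigma !raddfB /= !M3.
by rewrite -!addrA -!opprD addrA M_cyclotomic3 oppr0 addr0.
Qed.

Lemma twisted_conj_lamp0 (f a : lamp q d) (u r : Zd d) :
  (forall x, f x = a x + a (sigma (u + r - M u) x)) ->
  twisted_conj twist (MkWR f (u + r - M u)) (MkWR (Lamp (@fin_supp0 q d)) r).
Proof.
move=> fE; exists (MkWR a u); apply: wr_ext => [x|] //=.
by rewrite fE addr0 opprK /sigma opprB addrA addrAC.
Qed.

Definition digits3 (z : {ffun 'I_d -> 'I_3}) : Zd d := \row_i (z i : nat)%:Z.

Lemma coset_digits3 w : exists u z, w = u + digits3 z - M u.
Proof.
pose t : Zd d := \row_i divz (w 0 i) 3.
exists (t *+ 2 + M t), [ffun i => inord (absz (modz (w 0 i) 3))].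
have := M_cyclotomic3 t; rewrite raddfD raddfMn /=.
move/matrixP => tE; apply/matrixP => i j; move: (tE i j); rewrite (ord1 i) !mxE ffunE.
have := divz_eq (w 0 j) 3; set r := modz (w 0 j) 3.
have r_ge0 : 0 <= r := modz_ge0 _ (isT : 3 != 0 :> int).
have r_lt3 : r < 3 := ltz_pmod _ (isT : 0 < 3 :> int).
rewrite inordK ?abszE ?ger0_norm //; last by rewrite -ltz_nat abszE ger0_norm.
move: r_ge0 r_lt3.
(* generalizing the entries lets lia see them as plain [int] terms *)
move: (w 0 j) (divz (w 0 j) 3) r (M t 0 j) (M (M t) 0 j) => /=; lia.
Qed.

Lemma twist_finite_reidemeister : (2 : 'Z_q) \is a GRing.unit -> finite_reidemeister twist.
Proof.
move=> two_unit; pose digits := enum {ffun 'I_d -> 'I_3}.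
exists (size digits).
exists (fun i => MkWR (Lamp (@fin_supp0 q d)) (digits3 (nth [ffun => ord0] digits i))).
move=> [f w]; have [u [z wE]] := coset_digits3 w.
exists (index z digits); rewrite index_mem nth_index mem_enum // wE; split => //.
have a_fin := fin_supp_order3_half (sigma3 (u + digits3 z - M u)) (lamp_fin f).
apply: (twisted_conj_lamp0 (a := Lamp a_fin)) => x /=.
by rewrite order3_halfK //; apply: sigma3.
Qed.

End CubeRootOfUnityAutomorphism.

Definition rot3_mx (n : nat) : 'M[int]_(n + n) := block_mx 0 1%:M (- 1%:M) (- 1%:M).

Lemma rot3_mx_cyclotomic3 n : 1%:M + rot3_mx n + rot3_mx n *m rot3_mx n = 0.
Proof.
rewrite /rot3_mx mulmx_block (scalar_mx_block n n 1) !add_block_mx.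
rewrite !mul0mx !mulmx0 !mul1mx !mulNmx !mulmxN !mulmx1 opprK.
by rewrite !(addr0, add0r, oppr0, subrr, addrN, addNr); apply: block_mx0.
Qed.

Lemma mulmx_rot3_cyclotomic3 n (v : Zd (n + n)) :
  v + v *m rot3_mx n + v *m rot3_mx n *m rot3_mx n = 0.
Proof.
by rewrite -mulmxA -{1}(mulmx1 v) -!mulmxDr rot3_mx_cyclotomic3 mulmx0.
Qed.

Lemma Zp_unit2_odd_prime_powers N (p s : 'I_N -> nat) :
  (0 < N)%N -> (forall i, prime (p i) /\ (2 < p i)%N) -> (forall i, (0 < s i)%N) ->
  (2 : 'Z_(\prod_(i < N) p i ^ s i)) \is a GRing.unit.
Proof.
move=> N_gt0 p_odd_prime s_gt0; have p_gt1 i : (1 < p i)%N := prime_gt1 (p_odd_prime i).1.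
rewrite unitZpE; first rewrite coprime_sym coprime2n.
  apply: (big_ind odd) => // [m n m_odd n_odd | i _]; first by rewrite oddM m_odd.
  have [p_prime p_gt2] := p_odd_prime i; rewrite oddX orbC.
  by case: (even_prime p_prime) => [p2|->]; rewrite // p2 in p_gt2.
pose i0 := Ordinal N_gt0; rewrite (bigD1 i0) //= -[2%N]muln1 leq_mul //.
  by rewrite -{1}(expn0 (p i0)) ltn_exp2l.
by rewrite prodn_cond_gt0 // => i _; rewrite expn_gt0 ltnW.
Qed.

Theorem proposition4p6 (N k : nat) (p s : 'I_N -> nat) :
  (0 < N)%N -> (0 < k)%N ->
  (forall i, prime (p i) /\ (2 < p i)%N) ->
  (forall i, (0 < s i)%N) ->
  exists phi : WR (\prod_(i < N) p i ^ s i) (2 * k) ->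
                WR (\prod_(i < N) p i ^ s i) (2 * k),
    is_automorphism phi /\ finite_reidemeister phi.
Proof.
move=> N_gt0 _ p_odd_prime s_gt0.
have two_unit := Zp_unit2_odd_prime_powers N_gt0 p_odd_prime s_gt0.
rewrite mul2n -addnn.
exists (twist (M := mulmxr (rot3_mx k)) (@mulmx_rot3_cyclotomic3 k)).
by split; [apply: twist_automorphism | apply: twist_finite_reidemeister].
Qed.
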